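(* Let $k$ be a field, $A=kQ_A/I_A$ an indecomposable radical square zero algebra, and $B$ the algebra obtained from $A$ by gluing a source vertex and a sink vertex of $Q_A$. Then for every $n\ge2$ the map $\psi_n$ restricts to an injective map $\mathrm{Ker}(\delta^n_A)\hookrightarrow\mathrm{Ker}(\delta^n_B)$ which maps $\mathrm{Im}(\delta^{n-1}_A)$ into $\mathrm{Im}(\delta^{n-1}_B)$. In addition, $\dim_k\mathrm{HH}^n(B)-\dim_k\mathrm{HH}^n(A)\ge0$.
   Context: A radical square zero algebra is $kQ/I$ with $Q$ a finite quiver and $I$ generated by all paths of length 2; indecomposable means $Q$ connected. Gluing a source $e_1$ (no incoming arrows) and a sink $e_m$ (no outgoing arrows), both non-isolated: $B$ is the subalgebra generated by $e_1+e_m$, the other vertex idempotents and all arrows; $B\cong kQ_B/I_B$, $Q_B$ obtained by identifying $e_1,e_m$ into one vertex $f_1$, $I_B$ generated by all length-2 paths of $Q_B$. For a path $p=a_r\cdots a_1$ of $Q_A$, $p^*=a_r^*\cdots a_1^*$ is its image in $Q_B$, and vertices map to their images. $Q_n$ denotes the set of paths of length $n$; for path sets $X,Y$, $k(X\|Y)$ is the vector space with basis the pairs $x\|y$, $x\in X$, $y\in Y$, with the same source and same target. Cibils' complex for a radical square zero algebra $kQ/I$: $C^n=k(Q_n\|Q_0)\oplus k(Q_n\|Q_1)$ and $\delta^n:C^n\to C^{n+1}$, $\delta^n(x,y)=(0,D_n(x))$, where $D_n(\gamma\|e)=\sum_{a\in Q_1,\,s(a)=e}a\gamma\|a+(-1)^{n+1}\sum_{b\in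 Q_1,\,t(b)=e}\gamma b\|b$; its cohomology in degree $n\ge1$ is $\mathrm{HH}^n=\mathrm{Ker}\,\delta^n/\mathrm{Im}\,\delta^{n-1}$. $\delta^n_A,\delta^n_B$ denote these for $A,B$. $\psi_n:C^n_A\to C^n_B$ is the linear map $\gamma\|x\mapsto\gamma^*\|x^*$ for $\gamma\in(Q_A)_n$, $x\in(Q_A)_0\cup(Q_A)_1$. *)

From HB Require Import structures.
From mathcomp Require Import all_boot all_order all_algebra.
Set Implicit Arguments. Unset Strict Implicit. Unset Printing Implicit Defensive.
Import GRing.Theory.
Local Open Scope ring_scope.

Record quiver := Quiver {
  qV : finType; qE : finType; qs : qE -> qV; qt : qE -> qV }.

Section Quiver.
Variable Q : quiver.

(* A path of length n is encoded by its source vertex v together with the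
   sequence of its arrows [a_1; ...; a_n] in order of traversal, i.e. the
   path a_n ... a_1 (composition written right to left, as in the paper).
   For n = 0 this is the trivial path at v. *)
Fixpoint walk (v : qV Q) (l : seq (qE Q)) : bool :=
  if l is a :: l' then (qs a == v) && walk (qt a) l' else true.

Definition qpath (n : nat) := {x : qV Q * n.-tuple (qE Q) | walk x.1 x.2}.

Definition psrc n (p : qpath n) : qV Q := (val p).1.
Definition pseq n (p : qpath n) : seq (qE Q) := val (val p).2.
Definition ptgt n (p : qpath n) : qV Q := last (psrc p) (map (@qt Q) (pseq p)).

Definition xsrc (x : qV Q + qE Q) : qV Q :=
  match x with inl v => v | inr a => qs a end.
Definition xtgt (x : qV Q + qE Q) : qV Q :=
  match x with inl v => v | inr a => qt a end.

(* basis of k(Q_n || Q_0) (+) k(Q_n || Q_1): parallel pairs gamma || x *)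
Definition ppair (n : nat) :=
  {y : qpath n * (qV Q + qE Q) | (psrc y.1 == xsrc y.2) && (ptgt y.1 == xtgt y.2)}.

Definition pp_path n (b : ppair n) : qpath n := (val b).1.
Definition pp_x n (b : ppair n) : qV Q + qE Q := (val b).2.

Variable K : fieldType.

(* Cibils' cochain space C^n = k(Q_n||Q_0) (+) k(Q_n||Q_1), as functions
   on the basis of parallel pairs (coefficient vectors). *)
Definition cochain (n : nat) := {ffun ppair n -> K^o}.

(* Coefficient of the basis vector p || c (p of length n+1, c an arrow)
   in D_n(gamma || e) =
     sum_{a, s(a)=e} a gamma || a + (-1)^(n+1) sum_{b, t(b)=e} gamma b || b. *)
Definition Dcoef n (gamma : qpath n) (e : qV Q) (p : qpath n.+1) (c : qE Q) : K :=
  ((qs c == e) && (psrc p == psrc gamma) && (pseq p == rcons (pseq gamma) c))%:R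
  + (-1) ^+ n.+1 *
    ((qt c == e) && (psrc p == qs c) && (pseq p == c :: pseq gamma))%:R.

(* delta^n (x, y) = (0, D_n(x)), extended linearly. *)
Definition cdelta n (f : cochain n) : cochain n.+1 :=
  [ffun b' : ppair n.+1 =>
     (match pp_x b' with
     | inl _ => 0
     | inr c => \sum_(b : ppair n)
                  match pp_x b with
                  | inl e => (f b : K) * Dcoef (pp_path b) e (pp_path b') c
                  | inr _ => 0
                  end
     end : K^o)].

Definition kerd n : {vspace cochain n} := lker (linfun (@cdelta n)).

(* Im delta^{n-1} as a subspace of C^n (taken to be 0 for n = 0). *)
Definition imd n : {vspace cochain n} :=
  match n return {vspace cochain n} with
  | 0 => 0%VS
  | m.+1 => limg (linfun (@cdelta m))
  end.

(* dim_k HH^n = dim_k (Ker delta^n / Im delta^(n-1))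
             = dim Ker delta^n - dim Im delta^(n-1)   (Im is contained in Ker) *)
Definition HHdim n : nat := (\dim (kerd n) - \dim (imd n))%N.

End Quiver.

Definition is_source (Q : quiver) (v : qV Q) := forall a : qE Q, qt a != v.
Definition is_sink (Q : quiver) (v : qV Q) := forall a : qE Q, qs a != v.
Definition non_isolated (Q : quiver) (v : qV Q) :=
  exists a : qE Q, (qs a == v) || (qt a == v).
Definition qadj (Q : quiver) : rel (qV Q) :=
  fun x y => [exists a : qE Q, ((qs a == x) && (qt a == y)) || ((qs a == y) && (qt a == x))].
Definition connected_quiver (Q : quiver) := forall u v : qV Q, connect (@qadj Q) u v.

(* Gluing the vertices e1 and em: the vertex em is identified with e1.
   The vertex set of Q_B is V \ {em} (the guard "|| (e1 == em)" is only there
   so that the construction needs no proof of e1 != em; under the hypotheses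
   of the theorem e1 != em, so it reduces to v != em).  The vertex e1 of this
   set plays the role of f_1. *)
Section Glue.
Variables (Q : quiver) (e1 em : qV Q).

Definition gV := {v : qV Q | (v != em) || (e1 == em)}.

Definition glue (v : qV Q) : gV :=
  if insub v is Some w then w else Sub e1 (orNb (e1 == em)).

Definition glued_quiver : quiver :=
  @Quiver gV (qE Q) (fun a => glue (qs a)) (fun a => glue (qt a)).

Definition glue_x (x : qV Q + qE Q) : gV + qE Q :=
  match x with inl v => inl (glue v) | inr a => inr a end.

Variable K : fieldType.

(* psi_n : gamma || x |-> gamma^* || x^*, extended linearly *)
Definition psi n (f : @cochain Q K n) : @cochain glued_quiver K n :=
  [ffun b' : ppair glued_quiver n =>
     (\sum_(b : ppair Q n |
            (glue (psrc (pp_path b)) == psrc (pp_path b'))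
            && (pseq (pp_path b) == pseq (pp_path b'))
            && (glue_x (pp_x b) == pp_x b'))
        (f b : K) : K^o)].

End Glue.

From HB Require Import structures.
From mathcomp Require Import all_boot all_order all_algebra.
From mathcomp Require Import zify.

(* For n >= 1 a path of positive length is determined by its sequence of
   arrows, so gamma||x |-> gamma^*||x^* embeds the basis of C^n_A into that of
   C^n_B; psi_n is extension by zero along this embedding and restriction along
   it is a left inverse. The vertex of a cycle of positive length is the source
   of an arrow, hence not e_m, and the target of one, hence not e_1; so an
   arrow of Q_B composable with a glued cycle was already composable with it in
   Q_A. Consequently psi and the restriction both commute with delta: psi maps
   Ker into Ker, the restriction maps Im into Im, and the dimension inequality
   is linear algebra. *)

Set Implicit Arguments. Unset Strict Implicit. Unset Printing Implicit Defensive.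
Import GRing.Theory.
Local Open Scope ring_scope.

Lemma sum_codom (R : nmodType) (I J : finType) (h : I -> J) (F : J -> R) :
  injective h -> (forall j, j \notin codom h -> F j = 0) ->
  \sum_j F j = \sum_i F (h i).
Proof.
move=> h_inj F0; rewrite (bigID (mem (codom h))) /= [X in _ + X]big1 ?addr0 //.
by rewrite -big_uniq ?big_image // map_inj_uniq ?enum_uniq.
Qed.

Lemma dim_subquotient_le (K : fieldType) (U V : vectType K)
    (ZU IU : {vspace U}) (ZV IV : {vspace V}) (f : 'Hom(U, V)) (g : V -> U) :
    cancel f g -> (f @: ZU <= ZV)%VS -> (IV <= ZV)%VS ->
    {in IV, forall y, g y \in IU} ->
  (\dim ZU - \dim IU <= \dim ZV - \dim IV)%N.
Proof.
move=> fK fZ IZ gI.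
have kerf0 : lker f = 0%VS by apply/eqP/lker0P/(can_inj fK).
have dim_img W : \dim (f @: W) = \dim W by rewrite limg_dim_eq // kerf0 capv0.
have capI : (f @: ZU :&: IV <= f @: IU)%VS.
  apply/subvP => _ /memv_capP[/memv_imgP[x _ ->] fxI].
  by rewrite -[x]fK memv_img // gI.
have addZ : (f @: ZU + IV <= ZV)%VS by rewrite subv_add fZ IZ.
have := dimv_sum_cap (f @: ZU) IV; have := dimvS capI; have := dimvS addZ.
rewrite !dim_img; lia.
Qed.

Section Walks.
Variable Q : quiver.

Lemma walk_rcons (v : qV Q) l c :
  walk v (rcons l c) = walk v l && (qs c == last v (map (@qt Q) l)).
Proof. by elim: l v => [|a l IH] v /=; rewrite ?andbT // IH andbA. Qed.

Lemma walk_cons_src (v : qV Q) a l : walk v (a :: l) -> qs a = v.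
Proof. by case/andP=> /eqP. Qed.

Lemma psize n (p : qpath Q n) : size (pseq p) = n.
Proof. exact: size_tuple. Qed.

Lemma psrc_cons n (p : qpath Q n) a l : pseq p = a :: l -> psrc p = qs a.
Proof. by move=> pE; have := valP p; rewrite /= -/(pseq p) pE => /walk_cons_src. Qed.

Lemma ptgt_cons n (p : qpath Q n) a l : pseq p = a :: l -> ptgt p = qt (last a l).
Proof. by rewrite /ptgt => ->; rewrite /= last_map. Qed.

Lemma pseq_cons n (p : qpath Q n.+1) : exists a l, pseq p = a :: l.
Proof. by case: (pseq p) (psize p) => [|a l] // _; exists a, l. Qed.

Lemma ppair_par n (b : ppair Q n) :
  psrc (pp_path b) = xsrc (pp_x b) /\ ptgt (pp_path b) = xtgt (pp_x b).
Proof. by case/andP: (valP b) => /eqP -> /eqP ->. Qed.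

End Walks.

Definition splice_coef (K : fieldType) (T : eqType) n (s s' : seq T) (c : T) : K :=
  (s' == rcons s c)%:R + (-1) ^+ n.+1 * (s' == c :: s)%:R.

Lemma splice_coef_neq0 (K : fieldType) (T : eqType) n (s s' : seq T) c :
  splice_coef K n s s' c != 0 -> s' = rcons s c \/ s' = c :: s.
Proof.
rewrite /splice_coef; case: (s' =P _) => [|_]; first by left.
by case: (s' =P _) => [|_]; [right | rewrite mulr0 addr0 eqxx].
Qed.

Section Differential.
Variables (Q : quiver) (K : fieldType).

(* On a path of positive length the source is read off the first arrow and the
   target off the last one, so the conditions of [Dcoef] on vertices are
   automatic for a cycle [g] at [e]. *)
Lemma Dcoef_splice n (g : qpath Q n.+1) e (p : qpath Q n.+2) c :
  psrc g = e -> ptgt g = e -> Dcoef K g e p c = splice_coef K n.+1 (pseq g) (pseq p) c.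
Proof.
move=> gs gt; rewrite /Dcoef /splice_coef.
have [a [l gE]] := pseq_cons g; have ga := psrc_cons gE.
congr (_ + _ * _).
- case: (pseq p =P _) => pE; rewrite ?andbF // andbT.
  have pa : psrc p = qs a by apply: (@psrc_cons _ _ _ _ (rcons l c)); rewrite pE gE.
  have := valP p; rewrite /= -/(pseq p) -/(psrc p) pE walk_rcons => /andP[_ /eqP ->].
  by rewrite pa -ga -gt /ptgt !eqxx.
- case: (pseq p =P _) => pE; rewrite ?andbF // andbT.
  have := valP p; rewrite /= -/(pseq p) -/(psrc p) pE gE /=.
  move=> /andP[/eqP-> /andP[/eqP ca _]].
  by rewrite -gs ga -ca !eqxx.
Qed.

Definition delta_term n (f : cochain Q K n.+1) (b : ppair Q n.+1) s c : K :=
  if pp_x b is inl _ then f b * splice_coef K n.+1 (pseq (pp_path b)) s c else 0.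

Lemma cdeltaE n (f : cochain Q K n.+1) (b' : ppair Q n.+2) :
  cdelta f b' =
    if pp_x b' is inr c then \sum_b delta_term f b (pseq (pp_path b')) c else 0.
Proof.
rewrite ffunE; case: (pp_x b') => // c; apply: eq_bigr => b _.
rewrite /delta_term; case: (ppair_par b); case: (pp_x b) => // e gs gt.
by rewrite Dcoef_splice.
Qed.

Lemma cdelta_is_linear n : linear (@cdelta Q K n).
Proof.
move=> a f g; apply/ffunP => b'; rewrite !ffunE.
case: (pp_x b') => [_|c]; first by rewrite scaler0; exact/esym/addr0.
rewrite scaler_sumr -big_split; apply: eq_bigr => b _.
case: (pp_x b) => [e|_]; last by rewrite scaler0; exact/esym/addr0.
by rewrite !ffunE mulrDl scalerAl.
Qed.

HB.instance Definition _ n :=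
  GRing.isLinear.Build K (cochain Q K n) (cochain Q K n.+1) _ (@cdelta Q K n)
    (@cdelta_is_linear n).

(* delta takes values in the Q_1-component and reads only the Q_0-component. *)
Lemma cdeltaK n (f : cochain Q K n) : cdelta (cdelta f) = 0.
Proof.
apply/ffunP => b; rewrite !ffunE; case: (pp_x b) => // c.
by apply: big1 => b' _; rewrite ffunE; case: (pp_x b') => // e; rewrite mul0r.
Qed.

Lemma memv_kerd n (f : cochain Q K n) : (f \in kerd Q K n) = (cdelta f == 0).
Proof. by rewrite memv_ker lfunE. Qed.

Lemma imdP n (f : cochain Q K n.+1) :
  reflect (exists g, f = cdelta g) (f \in imd Q K n.+1).
Proof.
by apply: (iffP memv_imgP) => [[g _ ->] | [g ->]]; exists g; rewrite ?memvf ?lfunE.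
Qed.

Lemma imd_sub_kerd n : (imd Q K n <= kerd Q K n)%VS.
Proof.
case: n => [|n]; first exact: sub0v.
by apply/subvP => _ /imdP[f ->]; rewrite memv_kerd cdeltaK.
Qed.

End Differential.

Section Gluing.
Variables (Q : quiver) (e1 em : qV Q).
Local Notation B := (glued_quiver e1 em).
Local Notation gl := (glue e1 em).

Lemma glueE v : val (gl v) = if v == em then e1 else v.
Proof.
rewrite /glue; case: insubP => [w vP wE|].
  by rewrite wE; case: eqP vP => // -> /= /eqP.
by rewrite negb_or negbK => /andP[/eqP -> _]; rewrite eqxx SubK.
Qed.

Lemma glue_inj_neq_em u v : u != em -> v != em -> gl u = gl v -> u = v.
Proof. by move=> /negbTE uP /negbTE vP /(congr1 val); rewrite !glueE uP vP. Qed.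

Lemma glue_inj_neq_e1 u v : u != e1 -> v != e1 -> gl u = gl v -> u = v.
Proof.
move=> u1 v1 /(congr1 val); rewrite !glueE.
by do 2!case: eqP => [->|_] //; move=> E; rewrite E eqxx in u1 v1.
Qed.

Lemma walk_glue v l : walk v l -> walk (gl v : qV B) l.
Proof. by elim: l v => [|a l IH] v //= /andP[/eqP <- /IH]; rewrite eqxx. Qed.

Lemma last_glue v l :
  last (gl v) (map (@qt B) l) = gl (last v (map (@qt Q) l)).
Proof. by elim: l v => [|a l IH] v //=; rewrite -IH. Qed.

Definition glue_path n (p : qpath Q n) : qpath B n :=
  exist _ (gl (psrc p), (val p).2) (walk_glue (valP p)).

Lemma glue_path_src n (p : qpath Q n) : psrc (glue_path p) = gl (psrc p).
Proof. by []. Qed.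

Lemma glue_path_tgt n (p : qpath Q n) : ptgt (glue_path p) = gl (ptgt p).
Proof. exact: last_glue. Qed.

Lemma glue_pair_par n (b : ppair Q n) :
  (psrc (glue_path (pp_path b)) == @xsrc B (glue_x e1 em (pp_x b)))
  && (ptgt (glue_path (pp_path b)) == @xtgt B (glue_x e1 em (pp_x b))).
Proof.
rewrite glue_path_src glue_path_tgt; case: (ppair_par b) => -> ->.
by case: (pp_x b) => [v|a] /=; rewrite !eqxx.
Qed.

Definition glue_pair n (b : ppair Q n) : ppair B n :=
  exist _ (glue_path (pp_path b), glue_x e1 em (pp_x b)) (glue_pair_par b).

Lemma glue_pair_x n (b : ppair Q n) : pp_x (glue_pair b) = glue_x e1 em (pp_x b).
Proof. by []. Qed.

Lemma glue_pair_seq n (b : ppair Q n) : pseq (pp_path (glue_pair b)) = pseq (pp_path b).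
Proof. by []. Qed.

(* Fails in length 0, where the trivial paths at e1 and em are identified. A
   path of positive length is determined by its arrows, and the component [x]
   of a pair is recovered from the path when it is a vertex. *)
Lemma glue_pair_inj n : injective (@glue_pair n.+1).
Proof.
move=> b1 b2 b12.
have t12 : pseq (pp_path b1) = pseq (pp_path b2) :=
  congr1 (fun b => pseq (pp_path b)) b12.
have x12 : glue_x e1 em (pp_x b1) = glue_x e1 em (pp_x b2) := congr1 (@pp_x _ _) b12.
have [a [l lE]] := pseq_cons (pp_path b1).
have p12 : pp_path b1 = pp_path b2.
  apply/val_inj/injective_projections; last exact: val_inj t12.
  by rewrite -/(psrc _) -/(psrc _) (psrc_cons lE) (@psrc_cons _ _ _ a l) // -t12.
have {}x12 : pp_x b1 = pp_x b2.
  case: (ppair_par b1) (ppair_par b2) x12 => [s1 _] [s2 _].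
  rewrite -p12 in s2; case: (pp_x b1) (pp_x b2) s1 s2 => [v1|a1] [v2|a2] //=.
  - by move=> <- <-.
  - by move=> _ _ [->].
by apply/val_inj/injective_projections.
Qed.

Lemma glue_pairE n (b : ppair Q n) (b' : ppair B n) :
  [&& gl (psrc (pp_path b)) == psrc (pp_path b'),
      pseq (pp_path b) == pseq (pp_path b') & glue_x e1 em (pp_x b) == pp_x b']
  = (glue_pair b == b').
Proof.
apply/and3P/eqP => [[/eqP sE /eqP tE /eqP xE]|<-]; last by rewrite !eqxx.
apply/val_inj/injective_projections => //=.
by apply/val_inj/injective_projections => //=; apply/val_inj.
Qed.

End Gluing.

Section GluedCochains.
Variables (Q : quiver) (e1 em : qV Q) (K : fieldType).
Local Notation B := (glued_quiver e1 em).
Local Notation gb := (glue_pair e1 em).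

Lemma psiE n (f : cochain Q K n) b' :
  psi e1 em f b' = \sum_(b | gb b == b') f b.
Proof. by rewrite ffunE; apply: eq_bigl => b; rewrite -glue_pairE andbA. Qed.

Lemma psi_glue_pair n (f : cochain Q K n.+1) b : psi e1 em f (gb b) = f b.
Proof.
by rewrite psiE (big_pred1 b) // => b0; rewrite /= (inj_eq (@glue_pair_inj _ e1 em _)).
Qed.

Lemma psi_notin_codom n (f : cochain Q K n) b' :
  b' \notin codom (@glue_pair _ e1 em n) -> psi e1 em f b' = 0.
Proof.
move=> b'N; rewrite psiE big_pred0 // => b; apply: contraNF b'N => /eqP <-.
exact: codom_f.
Qed.

Lemma psi_is_linear n : linear (@psi Q e1 em K n).
Proof.
move=> a f g; apply/ffunP => b'; rewrite !ffunE scaler_sumr -big_split.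
by apply: eq_bigr => b _; rewrite !ffunE.
Qed.

HB.instance Definition _ n :=
  GRing.isLinear.Build K (cochain Q K n) (cochain B K n) _ (@psi Q e1 em K n)
    (@psi_is_linear n).

Definition unglue n (g : cochain B K n) : cochain Q K n := [ffun b => g (gb b)].

Lemma psiK n : cancel (@psi Q e1 em K n.+1) (@unglue n.+1).
Proof. by move=> f; apply/ffunP => b; rewrite ffunE psi_glue_pair. Qed.

End GluedCochains.

Section SourceSinkGluing.
Variables (Q : quiver) (e1 em : qV Q).
Hypotheses (e1_source : is_source e1) (em_sink : is_sink em).
Local Notation B := (glued_quiver e1 em).
Local Notation gl := (glue e1 em).
Local Notation gb := (glue_pair e1 em).

Lemma glue_qs_inj a a' : gl (qs a) = gl (qs a') -> qs a = qs a'.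
Proof. exact: glue_inj_neq_em. Qed.

Lemma glue_qt_inj a a' : gl (qt a) = gl (qt a') -> qt a = qt a'.
Proof. exact: glue_inj_neq_e1. Qed.

Lemma glue_pair_lift n (b' : ppair B n) (v : qV Q) (x : qV Q + qE Q) :
  walk v (pseq (pp_path b')) -> gl v = psrc (pp_path b') ->
  glue_x e1 em x = pp_x b' -> v = xsrc x ->
  last v (map (@qt Q) (pseq (pp_path b'))) = xtgt x ->
  b' \in codom (@gb n).
Proof.
move=> vW vE xE vx lx; pose p : qpath Q n := exist _ (v, (val (pp_path b')).2) vW.
have pP : (psrc p == xsrc x) && (ptgt p == xtgt x) by apply/andP; split; apply/eqP.
apply/codomP; exists (exist _ (p, x) pP); apply/esym/eqP.
by rewrite -glue_pairE vE xE !eqxx.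
Qed.

Lemma glue_pair_codom_extend n (b : ppair Q n.+1) e (b' : ppair B n.+2) (c : qE Q) :
  pp_x b = inl e -> pp_x b' = inr c ->
  (pseq (pp_path b') = rcons (pseq (pp_path b)) c \/
   pseq (pp_path b') = c :: pseq (pp_path b)) ->
  b' \in codom (@gb n.+2).
Proof.
move=> bx b'x; case: (ppair_par b) (ppair_par b'); rewrite bx b'x /= => gs gt [p's p't].
set g := pp_path b in gs gt *; set p' := pp_path b' in p's p't *.
have [a [l gE]] := pseq_cons g; have ae : qs a = e by rewrite -gs (psrc_cons gE).
have gW : walk e (pseq g) by rewrite -gs; exact: (valP g).
have last_g : last e (map (@qt Q) (pseq g)) = e by rewrite -{1}gs.
have p'W : walk (psrc p') (pseq p') := valP p'.
case=> p'E.
- have p'a : psrc p' = gl (qs a).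
    by rewrite (@psrc_cons _ _ p' a (rcons l c)) // p'E gE.
  have ce : qs c = e.
    rewrite -ae; apply: glue_qs_inj.
    move: p'W; rewrite p'E walk_rcons => /andP[_ /eqP cE].
    by rewrite [LHS]cE p'a last_glue ae last_g.
  apply: (@glue_pair_lift _ _ e (inr c)) => //=.
  + by rewrite p'E walk_rcons gW last_g ce eqxx.
  + by rewrite p's ce.
  + by rewrite p'E map_rcons last_rcons.
- have ce : qt c = e.
    rewrite -gt (ptgt_cons gE); apply: glue_qt_inj.
    move: p'W; rewrite p'E gE /= => /andP[_ /andP[/eqP aE _]].
    by rewrite -(ptgt_cons gE) gt -ae; exact: (esym aE).
  apply: (@glue_pair_lift _ _ (qs c) (inr c)) => //=.
  + by rewrite p'E /= eqxx ce.
  + by rewrite p'E /= ce last_g.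
Qed.

Lemma glue_pair_codom_restrict n (b'' : ppair B n.+1) e'' (b : ppair Q n.+2) c :
  pp_x b'' = inl e'' -> pp_x b = inr c ->
  (pseq (pp_path b) = rcons (pseq (pp_path b'')) c \/
   pseq (pp_path b) = c :: pseq (pp_path b'')) ->
  b'' \in codom (@gb n.+1).
Proof.
move=> b''x bx pE; case: (ppair_par b'') (ppair_par b).
rewrite b''x bx /= => gs gt [ps pt].
set g := pp_path b'' in gs gt *; set p := pp_path b in ps pt *.
have [a [l gE]] : exists (a : qE Q) l, pseq g = a :: l := pseq_cons g.
have ga : psrc g = gl (qs a) := psrc_cons gE.
have pW : walk (psrc p) (pseq p) := valP p.
suff [gW last_g] : walk (qs a) (pseq g) /\ last (qs a) (map (@qt Q) (pseq g)) = qs a.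
  by apply: (@glue_pair_lift _ _ (qs a) (inl (qs a))); rewrite //= -ga ?gs.
case: pE => p'E.
- have pa : psrc p = qs a by rewrite (@psrc_cons _ _ p a (rcons l c)) // p'E gE.
  move: pW; rewrite p'E walk_rcons pa => /andP[gW /eqP cE]; split=> //.
  rewrite -cE; apply: glue_qs_inj.
  by move: gt; rewrite -gs /ptgt ga last_glue -cE.
- move: pW pt; rewrite /ptgt p'E gE /= => /andP[_ /andP[/eqP -> aW]] <-.
  by rewrite eqxx.
Qed.

End SourceSinkGluing.

Section ChainMaps.
Variables (Q : quiver) (e1 em : qV Q) (K : fieldType).
Hypotheses (e1_source : is_source e1) (em_sink : is_sink em).
Local Notation B := (glued_quiver e1 em).
Local Notation gb := (glue_pair e1 em).

Lemma delta_term_glue_pair n (g : cochain B K n.+1) b (s : seq (qE Q)) (c : qE Q) :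
  delta_term g (gb b) s c = delta_term (unglue g) b s c.
Proof. by rewrite /delta_term ffunE glue_pair_x glue_pair_seq; case: (pp_x b). Qed.

Lemma psi_cdelta n (f : cochain Q K n.+1) :
  psi e1 em (cdelta f) = cdelta (psi e1 em f).
Proof.
have sum_psi s c : \sum_b' delta_term (psi e1 em f) b' s c = \sum_b delta_term f b s c.
  rewrite (sum_codom (@glue_pair_inj _ e1 em n)).
    by apply: eq_bigr => b _; rewrite delta_term_glue_pair psiK.
  by move=> b' b'N; rewrite /delta_term psi_notin_codom // mul0r; case: (pp_x b').
apply/ffunP => b'; have [/codomP[b ->] | b'N] := boolP (b' \in codom (@gb n.+2)).
  rewrite psi_glue_pair !cdeltaE glue_pair_x glue_pair_seq.
  by case: (pp_x b) => [//|c] /=; rewrite sum_psi.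
rewrite psi_notin_codom // cdeltaE; case b'x: (pp_x b') => [//|c].
rewrite sum_psi; apply/esym/big1 => b _; rewrite /delta_term.
case bx: (pp_x b) => [e|//]; apply/eqP; rewrite mulf_eq0 orbC; apply/orP; left.
apply: contraNT b'N => /splice_coef_neq0.
exact: glue_pair_codom_extend bx b'x.
Qed.

Lemma unglue_cdelta n (g : cochain B K n.+1) :
  unglue (cdelta g) = cdelta (unglue g).
Proof.
apply/ffunP => b; rewrite ffunE !cdeltaE glue_pair_x glue_pair_seq.
case bx: (pp_x b) => [//|c] /=.
rewrite (sum_codom (@glue_pair_inj _ e1 em n)).
  by apply: eq_bigr => b0 _; rewrite delta_term_glue_pair.
move=> b'' b''N; rewrite /delta_term; case b''x: (pp_x b'') => [e''|//].
apply/eqP; rewrite mulf_eq0 orbC; apply/orP; left.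
apply: contraNT b''N => /splice_coef_neq0.
exact: glue_pair_codom_restrict b''x bx.
Qed.

End ChainMaps.

Theorem proposition6p11 (K : fieldType) (Q : quiver) (e1 em : qV Q) :
  connected_quiver Q ->
  is_source e1 -> non_isolated e1 ->
  is_sink em -> non_isolated em ->
  forall n : nat, (2 <= n)%N ->
  [/\ (forall f, f \in kerd Q K n ->
         psi e1 em f \in kerd (glued_quiver e1 em) K n),
      {in kerd Q K n &, injective (@psi Q e1 em K n)},
      (forall f, f \in imd Q K n ->
         psi e1 em f \in imd (glued_quiver e1 em) K n)
    & (HHdim Q K n <= HHdim (glued_quiver e1 em) K n)%N].
Proof.
move=> _ e1_source _ em_sink _ [|[|n]] // _.
have psi_ker f : f \in kerd Q K n.+2 -> psi e1 em f \in kerd _ K n.+2.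
  by rewrite !memv_kerd -psi_cdelta // => /eqP ->; rewrite linear0.
have psi_im f : f \in imd Q K n.+2 -> psi e1 em f \in imd _ K n.+2.
  by case/imdP=> g ->; apply/imdP; exists (psi e1 em g); rewrite psi_cdelta.
have psi_inj := can_inj (@psiK Q e1 em K n.+1).
split=> //; first by move=> f g _ _ /psi_inj.
apply: (dim_subquotient_le (f := linfun (@psi Q e1 em K n.+2))
                            (g := @unglue _ e1 em K n.+2)).
- by move=> f; rewrite lfunE psiK.
- by apply/subvP => _ /memv_imgP[f /psi_ker fK ->]; rewrite lfunE.
- exact: imd_sub_kerd.
- by move=> _ /imdP[g ->]; apply/imdP; exists (unglue g); rewrite unglue_cdelta.
Qed.
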